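(* Let $G,H$ be finite groups and $U\leq G\times H$ a subdirect product. Suppose that for each prime divisor $p$ of $|q(U)|$ the Sylow $p$-subgroups of $q(U)$ are cyclic. Then $U$ is extensible.
   Context: For $U\leq G\times H$: $p_1(U)=\{g:\exists h,(g,h)\in U\}$, $p_2(U)=\{h:\exists g,(g,h)\in U\}$, $k_1(U)=\{g:(g,1)\in U\}$; $U$ is a subdirect product if $p_1(U)=G$, $p_2(U)=H$; the Goursat quotient is $q(U)=p_1(U)/k_1(U)$. An abelian group $A$ satisfies the Hypothesis (with set of primes $\pi$) if there is a unique set of primes $\pi$ such that for every $n\in\mathbb{N}$ the $n$-torsion part of $A$ is cyclic of order $n_\pi$ (the $\pi$-part of $n$). $U$ is $A$-extensible if every homomorphism $U\to A$ extends to a homomorphism $G\times H\to A$; $U$ is extensible if it is $A$-extensible for every abelian group $A$ satisfying the Hypothesis. *)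

From HB Require Import structures.
From mathcomp Require Import all_boot all_order all_algebra all_fingroup all_solvable.
Set Implicit Arguments. Unset Strict Implicit. Unset Printing Implicit Defensive.
Import GRing.Theory.
Local Open Scope group_scope.

Definition p1 (gT hT : finGroupType) (U : {set gT * hT}) : {set gT} :=
  [set x.1 | x in U].
Definition p2 (gT hT : finGroupType) (U : {set gT * hT}) : {set hT} :=
  [set x.2 | x in U].
Definition k1 (gT hT : finGroupType) (U : {set gT * hT}) : {set gT} :=
  [set g | (g, 1) \in U].
Definition goursat_q (gT hT : finGroupType) (U : {set gT * hT}) :=
  (p1 U / k1 U)%g.

Local Open Scope ring_scope.

(* "the n-torsion part of A is cyclic of order m" *)
Definition torsion_cyclic_of_order (A : zmodType) (n m : nat) : Prop :=
  exists g : A,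
    g *+ n = 0 /\ g *+ m = 0 /\ (forall k, (0 < k < m)%N -> g *+ k != 0) /\
    (forall x : A, x *+ n = 0 -> exists k : nat, x = g *+ k).

Definition hyp_with (A : zmodType) (pi : nat_pred) : Prop :=
  (forall p, p \in pi -> prime p) /\
  (forall n : nat, (0 < n)%N -> torsion_cyclic_of_order A n (n`_pi)%N).

Definition Hypothesis_A (A : zmodType) : Prop :=
  exists pi : nat_pred, hyp_with A pi /\
    forall pi' : nat_pred, hyp_with A pi' -> pi' =i pi.

Definition hom_on (T : finGroupType) (A : zmodType) (S : {set T}) (f : T -> A) :=
  forall x y, x \in S -> y \in S -> f (x * y)%g = f x + f y.

Definition A_extensible (gT hT : finGroupType) (G : {set gT}) (H : {set hT})
    (U : {set gT * hT}) (A : zmodType) : Prop :=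
  forall f : gT * hT -> A, hom_on U f ->
    exists F : gT * hT -> A, hom_on (setX G H) F /\ (forall u, u \in U -> F u = f u).

Definition extensible (gT hT : finGroupType) (G : {set gT}) (H : {set hT})
    (U : {set gT * hT}) : Prop :=
  forall A : zmodType, Hypothesis_A A -> A_extensible G H U A.

From mathcomp Require Import all_boot all_order all_algebra all_fingroup all_solvable.
From mathcomp Require Import ring.

(* Goursat reduces the extension of [f : U -> A] to that of the [p1 U]-invariant
   homomorphism [g |-> f (g, 1)] from [K = k1 U] to [G = p1 U]: once [alpha] extends
   it, [f (g, h) - alpha g] depends only on [h].  The torsion of [A] is divisible, so an
   invariant homomorphism extends along a cyclic quotient [L / K].  For a Sylow
   p-subgroup [P] of [G], [L = P K] has [L / K] cyclic, and the transfer from [L] to [G]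
   extends [phi *+ #|G : L|] with [p] not dividing [#|G : L|].  The [n] such that
   [phi *+ n] extends are closed under gcd, hence [phi] itself extends. *)

Set Implicit Arguments. Unset Strict Implicit. Unset Printing Implicit Defensive.
Import GRing.Theory.
Local Open Scope ring_scope.
Local Open Scope group_scope.

Definition torsion_divisible (A : zmodType) := forall (y : A) (N r : nat),
  (0 < N)%N -> (0 < r)%N -> y *+ N = 0 -> exists a : A, a *+ r = y.

Definition extends_to (gT : finGroupType) (A : zmodType) (G K : {set gT})
    (phi : gT -> A) :=
  exists2 alpha : gT -> A, hom_on G alpha & {in K, alpha =1 phi}.

Section HomOn.

Variables (T : finGroupType) (A : zmodType) (S : {group T}) (f : T -> A).
Hypothesis hom_f : hom_on S f.

Lemma hom_on1 : f 1 = 0.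
Proof.
have := hom_f (group1 S) (group1 S).
by rewrite mulg1 -{1}[f 1]addr0 => /addrI.
Qed.

Lemma hom_onV x : x \in S -> f x^-1 = - f x.
Proof.
by move=> Sx; apply/eqP; rewrite -addr_eq0 -hom_f ?groupV // mulVg hom_on1.
Qed.

Lemma hom_onX x n : x \in S -> f (x ^+ n) = f x *+ n.
Proof.
move=> Sx; elim: n => [|n IHn]; first by rewrite expg0 hom_on1.
by rewrite expgS hom_f ?groupX // IHn mulrS.
Qed.

Lemma hom_onJ x y : x \in S -> y \in S -> f (x ^ y) = f x.
Proof.
move=> Sx Sy; rewrite /conjg !hom_f ?groupV ?groupM // hom_onV //.
by rewrite addrCA addNr addr0.
Qed.

Lemma hom_on_card x : x \in S -> f x *+ #|S| = 0.
Proof. by move=> Sx; rewrite -hom_onX // expg_cardG // hom_on1. Qed.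

End HomOn.

Lemma hom_on_setX (gT hT : finGroupType) (A : zmodType) (G : {set gT})
    (H : {set hT}) (alpha : gT -> A) (beta : hT -> A) :
  hom_on G alpha -> hom_on H beta ->
  hom_on (setX G H) (fun u => alpha u.1 + beta u.2).
Proof.
move=> hom_alpha hom_beta [x h] [y k] /setXP[Gx Hh] /setXP[Gy Hk] /=.
by rewrite hom_alpha // hom_beta // addrACA.
Qed.

Lemma mulrn_modn (A : zmodType) (g : A) m n :
  g *+ m = 0 -> g *+ n = g *+ (n %% m).
Proof.
by move=> gm; rewrite {1}(divn_eq n m) mulrnDr mulnC mulrnA gm mul0rn add0r.
Qed.

Lemma mulrn_eq0_dvdn (A : zmodType) (g : A) m n : (0 < m)%N ->
  (forall k, (0 < k < m)%N -> g *+ k != 0) -> g *+ m = 0 -> g *+ n = 0 -> (m %| n)%N.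
Proof.
move=> m_gt0 min_m gm gn; apply/negPn/negP => ndvd.
have := min_m (n %% m)%N; rewrite ltn_pmod // andbT lt0n => /(_ ndvd).
by rewrite -mulrn_modn // gn eqxx.
Qed.

Lemma partn_dvdn_cancel pi r N k : (0 < r)%N -> (0 < N)%N ->
  ((r * N)`_pi %| k * N)%N -> (r`_pi %| k)%N.
Proof.
move=> r_gt0 N_gt0; have -> : (k * N = N`_pi * (k * N`_pi^'))%N.
  by rewrite mulnCA partnC.
rewrite partnM // (mulnC (r`_pi)%N) dvdn_pmul2l ?part_gt0 //.
by rewrite Gauss_dvdl // coprime_partC.
Qed.

(* [y = g *+ k] in the cyclic [rN]-torsion of order [m = (rN)`_pi]; then [r`_pi]
   divides [k], and Bezout inverts the pi'-part of [r] modulo [N`_pi]. *)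
Lemma hyp_with_torsion_divisible (A : zmodType) pi :
  hyp_with A pi -> torsion_divisible A.
Proof.
case=> _ cyclic_torsion y N r N_gt0 r_gt0 yN.
have rN_gt0 : (0 < r * N)%N by rewrite muln_gt0 r_gt0.
have [g [_ [gm [min_m gen]]]] := cyclic_torsion _ rN_gt0.
set m := ((r * N)`_pi)%N in gm min_m.
have [k def_y] : exists k, y = g *+ k.
  by apply: gen; rewrite mulnC mulrnA yN mul0rn.
subst y; have m_dvd_kN : (m %| k * N)%N.
  by apply: (mulrn_eq0_dvdn (part_gt0 _ _) min_m gm); rewrite mulrnA.
have [k' ->] := dvdnP (partn_dvdn_cancel r_gt0 N_gt0 m_dvd_kN).
have [b _] := Bezoutl (r`_pi^')%N (part_gt0 pi N).
rewrite (eqnP (coprime_partC _ _ _)) => /dvdnP[c Nc].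
have m_dvd : (m %| k' * r`_pi + b * k' * r)%N.
  have -> : (k' * r`_pi + b * k' * r = k' * r`_pi * (1 + b * r`_pi^'))%N.
    by rewrite -{2}(partnC pi r_gt0); ring.
  by rewrite /m partnM // Nc dvdn_mul ?dvdn_mull.
exists (- (g *+ (b * k'))).
apply/eqP; rewrite mulNrn -mulrnA eq_sym -addr_eq0 -mulrnDr.
by case/dvdnP: m_dvd => c' ->; rewrite mulnC mulrnA gm mul0rn.
Qed.

Section CyclicExtension.

Variables (gT : finGroupType) (A : zmodType) (L K : {group gT}) (phi : gT -> A).
Variables (x : gT) (a : A).
Hypotheses (nsKL : K <| L) (hom_phi : hom_on K phi)
  (phiJ : {in L & K, forall y k, phi (k ^ y) = phi k})
  (Lx : x \in L) (genLK : L / K = <[coset K x]>)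
  (root_a : a *+ #[coset K x] = phi (x ^+ #[coset K x])).

Let r := #[coset K x].
Let sKL : K \subset L := normal_sub nsKL.
Let nKL : L \subset 'N(K) := normal_norm nsKL.
Let Nx : x \in 'N(K) := subsetP nKL x Lx.

Lemma mem_expg_coset j : (x ^+ j \in K) = (r %| j)%N.
Proof.
rewrite order_dvdn -(morphX _ _ Nx); apply/idP/eqP; first exact: coset_id.
exact: coset_idr (groupX j Nx).
Qed.

Definition coset_exponent l : nat :=
  if [pick i : 'I_r | x ^- i * l \in K] is Some i then i else 0.

Lemma coset_exponentP l : l \in L -> x ^- coset_exponent l * l \in K.
Proof.
move=> Ll; rewrite /coset_exponent; case: pickP => [i // | no_i].
have : coset K l \in <[coset K x]> by rewrite -genLK mem_quotient.
case/cyclePmin => i lt_i_r def_l.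
have /negbT/negP[] := no_i (Ordinal lt_i_r); have Nl := subsetP nKL l Ll.
rewrite coset_idr ?groupM ?groupV ?groupX //.
by rewrite morphM ?morphV ?morphX ?groupV ?groupX //= def_l mulVg.
Qed.

(* [l = x ^+ i * k] is sent to [a *+ i + phi k]; [root_a] makes this independent
   of the choice of [i]. *)
Definition cyclic_ext l := a *+ coset_exponent l + phi (x ^- coset_exponent l * l).

Lemma cyclic_extE l j : l \in L -> x ^- j * l \in K ->
  cyclic_ext l = a *+ j + phi (x ^- j * l).
Proof.
move=> Ll; rewrite /cyclic_ext; move: (coset_exponent l) (coset_exponentP Ll) => i.
wlog le_ij : i j / (i <= j)%N.
  move=> IH Ki Kj; case: (leqP i j) => [le_ij | /ltnW le_ji]; first exact: IH.
  by rewrite (IH j i).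
move=> Ki Kj; have def_i : x ^- i * l = x ^+ (j - i) * (x ^- j * l).
  have def_j : x ^- j = x ^- (j - i) * x ^- i by rewrite -invMg -expgD subnKC.
  by rewrite def_j -mulgA mulKVg.
have /dvdnP[q def_ji] : (r %| j - i)%N.
  rewrite -mem_expg_coset -(mulgK (x ^- j * l) (x ^+ (j - i))) -def_i.
  by rewrite groupM ?groupV.
have Kxr : x ^+ r \in K by rewrite mem_expg_coset.
have Kxji : x ^+ (j - i) \in K by rewrite mem_expg_coset def_ji dvdn_mull.
rewrite def_i hom_phi // addrA def_ji mulnC expgM (hom_onX hom_phi) //.
by rewrite -root_a -mulrnA (mulnC r) -def_ji -mulrnDr subnKC.
Qed.

Lemma hom_on_cyclic_ext : hom_on L cyclic_ext.
Proof.
move=> l l' Ll Ll'.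
set i := coset_exponent l; set j := coset_exponent l'.
have Ki : x ^- i * l \in K := coset_exponentP Ll.
have Kj : x ^- j * l' \in K := coset_exponentP Ll'.
have NKxj : x ^+ j \in 'N(K) by rewrite groupX.
have def_ll' : x ^- (i + j) * (l * l') = (x ^- i * l) ^ x ^+ j * (x ^- j * l').
  by rewrite /conjg expgD invMg !mulgA mulgK.
have Kij : x ^- (i + j) * (l * l') \in K by rewrite def_ll' groupM ?memJ_norm.
rewrite (cyclic_extE (groupM Ll Ll') Kij) (cyclic_extE Ll Ki) (cyclic_extE Ll' Kj).
by rewrite def_ll' hom_phi ?memJ_norm // phiJ ?groupX // mulrnDr addrACA.
Qed.

Lemma cyclic_ext_id : {in K, cyclic_ext =1 phi}.
Proof.
move=> k Kk; rewrite (cyclic_extE (j := 0)) ?(subsetP sKL) //.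
  by rewrite expg0 invg1 mul1g mulr0n add0r.
by rewrite expg0 invg1 mul1g.
Qed.

End CyclicExtension.

Lemma cyclic_quotient_extension (gT : finGroupType) (A : zmodType)
    (L K : {group gT}) (phi : gT -> A) :
  torsion_divisible A -> K <| L -> cyclic (L / K) -> hom_on K phi ->
  {in L & K, forall y k, phi (k ^ y) = phi k} -> extends_to L K phi.
Proof.
move=> divA nsKL /cyclicP[xK genLK] hom_phi phiJ.
have /morphimP[x Nx Lx def_xK] : xK \in L / K by rewrite genLK cycle_id.
rewrite {xK}def_xK in genLK.
have [a root_a] : exists a, a *+ #[coset K x] = phi (x ^+ #[coset K x]).
  apply: (divA _ #|K|); rewrite ?order_gt0 ?cardG_gt0 // hom_on_card //.
  by rewrite (mem_expg_coset nsKL Lx).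
exists (cyclic_ext K phi x a).
  exact: hom_on_cyclic_ext nsKL hom_phi phiJ Lx genLK root_a.
exact: cyclic_ext_id nsKL hom_phi Lx genLK root_a.
Qed.

Lemma repr_rcoset_shift_mem (gT : finGroupType) (L : {group gT}) y z :
  repr (L :* y) * z * (repr (L :* (y * z)))^-1 \in L.
Proof.
have /rcosetP[l1 Ll1 ->] := mem_repr_rcoset L y.
have /rcosetP[l2 Ll2 ->] := mem_repr_rcoset L (y * z).
by rewrite invMg !mulgA -(mulgA l1 y z) mulgK groupM ?groupV.
Qed.

Section Transfer.

Variables (gT : finGroupType) (A : zmodType) (G L : {group gT}) (psi : gT -> A).
Hypotheses (sLG : L \subset G) (hom_psi : hom_on L psi).

Definition transfer_zmod g :=
  \sum_(C in rcosets L G) psi (repr C * g * (repr (C :* g))^-1).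

Lemma hom_on_transfer_zmod : hom_on G transfer_zmod.
Proof.
move=> s t Gs Gt; rewrite /transfer_zmod.
rewrite [X in _ = _ + X](reindex_acts 'Rs _ Gs) ?actsRs_rcosets //= -big_split /=.
apply: eq_bigr => _ /rcosetsP[y Gy ->]; rewrite !rcosetE -!rcosetM.
by rewrite -hom_psi ?repr_rcoset_shift_mem // !mulgA mulgKV.
Qed.

Lemma transfer_zmod_normal (K : {group gT}) :
  K \subset L -> G \subset 'N(K) -> {in G & K, forall g k, psi (k ^ g) = psi k} ->
  {in K, forall k, transfer_zmod k = psi k *+ #|G : L|}.
Proof.
move=> sKL nKG psiJ k Kk.
rewrite /transfer_zmod /indexg -sumr_const; apply: eq_bigr => _ /rcosetsP[y Gy ->].
have Gk : k \in G by rewrite (subsetP sLG) // (subsetP sKL).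
have Gr : repr (L :* y) \in G.
  by have /rcosetP[l Ll ->] := mem_repr_rcoset L y; rewrite groupM // (subsetP sLG).
have -> : L :* y :* k = L :* y.
  have Lk : k ^ y^-1 \in L.
    by rewrite (subsetP sKL) // memJ_norm // (subsetP nKG) ?groupV.
  have def_yk : y * k = k ^ y^-1 * y by rewrite /conjg invgK mulgA mulgKV.
  by rewrite -rcosetM def_yk rcosetM (rcoset_id Lk).
set r := repr (L :* y).
by rewrite (_ : r * k * r^-1 = k ^ r^-1) ?psiJ ?groupV // /conjg invgK mulgA.
Qed.

End Transfer.

Lemma gcd_closed_has1 (S : nat -> Prop) n : (0 < n)%N -> S n ->
  (forall a b, (0 < a)%N -> S a -> S b -> S (gcdn a b)) ->
  (forall p, prime p -> exists2 m, ~~ (p %| m)%N & S m) -> S 1%N.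
Proof.
move=> + + S_gcd S_p'; have [N] := ubnP n.
elim: N n => // N IHN n /ltnSE le_nN n_gt0 Sn.
have [n_le1 | n_gt1] := leqP n 1; first by rewrite -(@anti_leq n 1%N) ?n_le1.
have [m p'm Sm] := S_p' _ (pdiv_prime n_gt1).
apply: (IHN _ _ _ (S_gcd _ _ n_gt0 Sn Sm)); last by rewrite gcdn_gt0 n_gt0.
rewrite (leq_trans _ le_nN) // ltn_neqAle dvdn_leq ?dvdn_gcdl // andbT.
apply: contraNneq p'm => gcd_n.
by rewrite (dvdn_trans (pdiv_dvd n)) // -gcd_n dvdn_gcdr.
Qed.

Section ZgroupExtension.

Variables (gT : finGroupType) (A : zmodType) (G K : {group gT}) (phi : gT -> A).

Lemma extends_to_mulrn_gcd a b : (0 < a)%N ->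
  extends_to G K (fun k => phi k *+ a) -> extends_to G K (fun k => phi k *+ b) ->
  extends_to G K (fun k => phi k *+ gcdn a b).
Proof.
move=> a_gt0 [alpha hom_alpha alpha_phi] [beta hom_beta beta_phi].
have [u _ /dvdnP[c def_c]] := Bezoutl b a_gt0.
exists (fun g => alpha g *+ c - beta g *+ u).
  by move=> x y Gx Gy; rewrite hom_alpha // hom_beta // !mulrnDl opprD addrACA.
move=> k Kk; rewrite alpha_phi // beta_phi // -!mulrnA (mulnC a) (mulnC b) -def_c.
by rewrite mulrnDr addrK.
Qed.

Hypotheses (divA : torsion_divisible A) (nsKG : K <| G) (ZgGK : Zgroup (G / K))
  (hom_phi : hom_on K phi) (phiJ : {in G & K, forall g k, phi (k ^ g) = phi k}).

Lemma extends_to_p'multiple p : prime p ->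
  exists2 n, ~~ (p %| n)%N & extends_to G K (fun k => phi k *+ n).
Proof.
move=> p_pr; have [P sylP] := Sylow_exists p G.
have [sKG nKG] := andP nsKG; have sPG := pHall_sub sylP.
pose L := (P <*> K)%G.
have sLG : L \subset G by rewrite join_subG sPG sKG.
have nsKL : K <| L by rewrite /normal joing_subr (subset_trans sLG nKG).
have cycLK : cyclic (L / K).
  rewrite quotientYidr ?(subset_trans sPG nKG) //.
  apply: (forall_inP ZgGK (P / K)%G); apply: (p_Sylow (p := p)).
  exact: quotient_pHall (subset_trans sPG nKG) sylP.
have phiJL : {in L & K, forall y k, phi (k ^ y) = phi k}.
  by move=> y k Ly Kk; rewrite phiJ ?(subsetP sLG).
have [psi hom_psi psi_phi] := cyclic_quotient_extension divA nsKL cycLK hom_phi phiJL.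
have psiJ : {in G & K, forall g k, psi (k ^ g) = psi k}.
  by move=> g k Gg Kk; rewrite !psi_phi ?phiJ // memJ_norm // (subsetP nKG).
exists #|G : L|.
  rewrite -p'natE //; apply: pnat_dvd (indexgS G (joing_subl P K)) _.
  by case/and3P: sylP.
exists (transfer_zmod G L psi); first exact: hom_on_transfer_zmod.
move=> k Kk; have sKL := normal_sub nsKL.
by rewrite (transfer_zmod_normal sLG sKL nKG psiJ Kk) psi_phi.
Qed.

Theorem Zgroup_quotient_extension : extends_to G K phi.
Proof.
pose S n := extends_to G K (fun k => phi k *+ n).
have [alpha hom_alpha alpha_phi] : S 1%N.
  apply: (gcd_closed_has1 (cardG_gt0 K)) extends_to_mulrn_gcd extends_to_p'multiple.
  exists (fun=> 0); first by move=> x y _ _; rewrite addr0.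
  by move=> k Kk; rewrite hom_on_card.
by exists alpha => // k Kk; rewrite alpha_phi ?mulr1n.
Qed.

End ZgroupExtension.

Lemma Zgroup_of_cyclic_Sylows (gT : finGroupType) (G : {group gT}) :
  (forall p, prime p -> (p %| #|G|)%N ->
     forall P : {group gT}, P \in 'Syl_p(G) -> cyclic P) -> Zgroup G.
Proof.
move=> cyclic_Syl; apply/forall_inP => P /SylowP[p p_pr sylP].
have [p_dvd | p'G] := boolP (p %| #|G|)%N.
  by apply: (cyclic_Syl p p_pr p_dvd); rewrite inE.
by rewrite card1_trivg ?cyclic1 // (card_Hall sylP) part_p'nat // p'natE.
Qed.

Lemma pairg1J (gT hT : finGroupType) (k g : gT) (h : hT) :
  (k, 1) ^ (g, h) = (k ^ g, 1).
Proof. by rewrite -[LHS]/(k ^ g, 1 ^ h) conj1g. Qed.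

Section Goursat.

Variables (gT hT : finGroupType) (U : {group gT * hT}).

Lemma p1_group_set : group_set (p1 U).
Proof.
by rewrite /p1 -(morphimEsub [morphism of @fst gT hT] (subsetT U)) groupP.
Qed.
Canonical p1_group := Group p1_group_set.

Lemma k1_group_set : group_set (k1 U).
Proof.
rewrite (_ : k1 U = @pairg1 gT hT @*^-1 U) ?groupP //.
by apply/setP => g; rewrite !inE.
Qed.
Canonical k1_group := Group k1_group_set.

Lemma k1_normal : k1 U <| p1 U.
Proof.
apply/andP; split.
  by apply/subsetP => k; rewrite inE => Uk; apply/imsetP; exists (k, 1).
apply/subsetP => _ /imsetP[[g h] Ugh ->]; rewrite inE; apply/subsetP => k.
rewrite mem_conjg !inE /= => Uk.
by rewrite -(conjgKV g k) -(pairg1J _ _ h) groupJ.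
Qed.

Variables (A : zmodType) (f : gT * hT -> A).
Hypothesis hom_f : hom_on U f.

Lemma hom_on_k1 : hom_on (k1 U) (fun g => f (g, 1)).
Proof.
by move=> x y; rewrite !inE => Ux Uy; rewrite -hom_f // -pairg1_morphM.
Qed.

Lemma k1_invariant : {in p1 U & k1 U, forall g k, f (k ^ g, 1) = f (k, 1)}.
Proof.
move=> _ k /imsetP[[g h] Ugh ->]; rewrite inE => Uk.
by rewrite /= -(pairg1J _ _ h) (hom_onJ hom_f).
Qed.

Lemma hom_on_factor_snd : {in k1 U, forall g, f (g, 1) = 0} ->
  exists2 beta, hom_on (p2 U) beta & {in U, forall u, f u = beta u.2}.
Proof.
move=> f_k1.
have f_snd : {in U &, forall u v, u.2 = v.2 -> f u = f v}.
  move=> [g h] [g' h'] Uu Uv /= eq_h; subst h'.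
  have def_k : (g, h) * (g', h)^-1 = (g * g'^-1, 1).
    by rewrite -[LHS]/(_, h * h^-1) mulgV.
  apply/eqP; rewrite -subr_eq0 -(hom_onV hom_f) // -hom_f ?groupV // def_k.
  by rewrite f_k1 // inE -def_k groupM ?groupV.
pose beta h := if [pick u in U | u.2 == h] is Some u then f u else 0.
have f_beta : {in U, forall u, f u = beta u.2}.
  move=> u Uu; rewrite /beta; case: pickP => [v /andP[Uv /eqP eq_h] | /(_ u)].
    exact: f_snd (esym eq_h).
  by rewrite Uu eqxx.
exists beta => // _ _ /imsetP[u Uu ->] /imsetP[v Uv ->].
by rewrite -[u.2 * v.2]/((u * v).2) -!f_beta ?groupM // hom_f.
Qed.

End Goursat.

Lemma subdirect_extension (gT hT : finGroupType) (U : {group gT * hT})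
    (A : zmodType) (f : gT * hT -> A) :
  hom_on U f -> extends_to (p1 U) (k1 U) (fun g => f (g, 1)) ->
  exists F, hom_on (setX (p1 U) (p2 U)) F /\ {in U, F =1 f}.
Proof.
move=> hom_f [alpha hom_alpha alpha_f].
pose d u := f u - alpha u.1.
have hom_d : hom_on U d.
  move=> u v Uu Uv; have [p1u p1v] := (imset_f fst Uu, imset_f fst Uv).
  by rewrite /d hom_f // (hom_alpha _ _ p1u p1v) opprD addrACA.
have d_k1 : {in k1 U, forall g, d (g, 1) = 0}.
  by move=> g Kg; rewrite /d alpha_f ?subrr.
have [beta hom_beta d_beta] := hom_on_factor_snd hom_d d_k1.
exists (fun u => alpha u.1 + beta u.2); split; first exact: hom_on_setX.
by move=> u Uu /=; rewrite -d_beta // /d addrC subrK.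
Qed.

Theorem corollary4p1 (gT hT : finGroupType) (G : {group gT}) (H : {group hT})
    (U : {group gT * hT}) :
  U \subset setX G H ->
  p1 U = G -> p2 U = H ->
  (forall p : nat, prime p -> (p %| #|goursat_q U|)%N ->
     forall P : {group coset_of (k1 U)}, P \in 'Syl_p(goursat_q U) -> cyclic P) ->
  extensible G H U.
Proof.
move=> _ <- <- cyclic_Syl A [pi [hyp_pi _]] f hom_f.
apply: (subdirect_extension hom_f).
apply: Zgroup_quotient_extension (hyp_with_torsion_divisible hyp_pi) (k1_normal U) _
  (hom_on_k1 hom_f) (k1_invariant hom_f).
exact: Zgroup_of_cyclic_Sylows.
Qed.
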